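(* Let $Z\in\mathbb{R}^{n\times m}$ and $w\in\mathbb{R}^n$ be fixed, let $\theta^*\in\mathbb{R}^m$ with $S^*=\operatorname{supp}(\theta^* )$, and set $y=Z\theta^*+w$. Let $\rho_\lambda$ satisfy Condition (R) and assume that for some $\delta\in(0,1)$, $$\frac1n|\langle w,Zu\rangle|\le\delta\Big[\frac{1}{2n}\|Zu\|_2^2+\rho_\lambda(u)\Big]\quad\text{for all }u\in\mathbb{R}^m.$$ Let $\xi=(1+\delta)/(1-\delta)$ and assume $\gamma^2:=\gamma^2_\rho(Z,S^*;\xi)>0$. Then every $\hat\theta\in\arg\min_{\theta\in\mathbb{R}^m}\frac{1}{2n}\|y-Z\theta\|_2^2+\rho_\lambda(\theta)$ satisfies $$\|\hat\theta-\theta^*\|_2\le\frac{2\xi}{\gamma^2}\rho_\lambda'(0^+)\|\theta^*\|_0^{1/2},\qquad\|\hat\theta-\theta^*\|_1\le\frac{2\xi(1+\xi)}{\gamma^2}\rho_\lambda'(0^+)\|\theta^*\|_0.$$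
   Context: $\rho_\lambda(u)=\sum_i\rho_\lambda(|u_i|)$ for vectors. Condition (R): $\rho_\lambda:[0,\infty)\to[0,\infty)$ is concave, nondecreasing, right-differentiable at $0$, $\rho_\lambda(0)=0$, $0<\rho_\lambda'(0^+)<\infty$ (right derivative at $0$), and there are constants $a,b\ge0$ independent of $\lambda$ with $\rho_\lambda(x)\ge\min\{a\lambda x,b\lambda^2\}$. For $A\subset[m]$ and $u\in\mathbb{R}^m$, $u_A$ denotes $u$ restricted to the coordinates in $A$. Cone: $\mathcal{C}_\rho(A,\xi)=\{u\in\mathbb{R}^m:\rho_\lambda(u_{A^c})\le\xi\rho_\lambda(u_A)\}$. Generalized restricted eigenvalue constant: $\gamma^2_\rho(Z,A;\xi)=\inf\{\|Zu\|_2^2/(n\|u\|_2^2):u\in\mathcal{C}_\rho(A,\xi),u\neq0\}$. *)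

From HB Require Import structures.
From mathcomp Require Import all_boot all_order all_algebra.
From mathcomp Require Import all_classical all_reals all_analysis.
Set Implicit Arguments. Unset Strict Implicit. Unset Printing Implicit Defensive.
Import Order.TTheory GRing.Theory Num.Theory.
Import numFieldNormedType.Exports.
Local Open Scope classical_set_scope.
Local Open Scope ring_scope.

Section Defs.
Variable R : realType.

Definition norm2 k (v : 'cV[R]_k) : R := Num.sqrt (\sum_i (v i 0) ^+ 2).
Definition norm1 k (v : 'cV[R]_k) : R := \sum_i `|v i 0|.
Definition supp k (v : 'cV[R]_k) : {set 'I_k} := [set i | v i 0 != 0].
Definition norm0 k (v : 'cV[R]_k) : nat := #|supp v|.
Definition dotv k (v w : 'cV[R]_k) : R := \sum_i v i 0 * w i 0.

Definition pen (rho : R -> R) k (u : 'cV[R]_k) : R := \sum_i rho `|u i 0|.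
Definition penA (rho : R -> R) k (A : {set 'I_k}) (u : 'cV[R]_k) : R :=
  \sum_(i in A) rho `|u i 0|.

Definition cone (rho : R -> R) k (A : {set 'I_k}) (xi : R) : set 'cV[R]_k :=
  [set u | penA rho (~: A) u <= xi * penA rho A u].

(* generalized restricted eigenvalue constant, as an extended real
   (infimum of the empty set is +oo) *)
Definition gamma2 (rho : R -> R) n m (Z : 'M[R]_(n, m)) (A : {set 'I_m}) (xi : R)
  : \bar R :=
  ereal_inf [set ((norm2 (Z *m u)) ^+ 2 / (n%:R * (norm2 u) ^+ 2))%:E
            | u in [set u | cone rho A xi u /\ u != 0]].

Definition rderiv0 (f : R -> R) (d : R) : Prop :=
  (fun h => (f h - f 0) / h) @ 0^'+ --> d.

Definition condR (rho : R -> R -> R) : Prop :=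
  (forall lam, 0 < lam ->
     (forall x, 0 <= x -> 0 <= rho lam x) /\
     (forall x y t, 0 <= x -> 0 <= y -> 0 <= t -> t <= 1 ->
        t * rho lam x + (1 - t) * rho lam y <= rho lam (t * x + (1 - t) * y)) /\
     (forall x y, 0 <= x -> x <= y -> rho lam x <= rho lam y) /\
     rho lam 0 = 0 /\
     (exists d, 0 < d /\ rderiv0 (rho lam) d)) /\
  (exists a b : R, 0 <= a /\ 0 <= b /\
     forall lam x, 0 < lam -> 0 <= x ->
       Num.min (a * lam * x) (b * lam ^+ 2) <= rho lam x).

End Defs.

From HB Require Import structures.
From mathcomp Require Import all_boot all_order all_algebra.
From mathcomp Require Import all_classical all_reals all_analysis.
From mathcomp Require Import ring lra.
Set Implicit Arguments. Unset Strict Implicit. Unset Printing Implicit Defensive.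
Import Order.TTheory GRing.Theory Num.Theory.
Import numFieldNormedType.Exports.
Local Open Scope classical_set_scope.
Local Open Scope ring_scope.

(* Write D = thetahat - theta_star, S = supp theta_star and rho_A for the penalty on the coordinates
   in A.  Comparing the objective at thetahat and at theta_star, subadditivity of the concave
   penalty turns the penalty difference into rho_{S^c}(D) - rho_S(D), and the noise condition
   absorbs the cross term <w, Z D>; this leaves
     |Z D|^2 / 2n + rho_{S^c}(D) <= xi rho_S(D),
   so D lies in the cone and |Z D|^2 / n >= gamma^2 |D|^2.  Concavity also gives
   rho(x) <= rho'(0+) x, hence rho_S(D) <= rho'(0+) sqrt s |D|_2, and the l2 bound follows.
   For the l1 bound, let q = rho(t)/t be the chord slope at t = 2 rho'(0+)/gamma^2.  Splitting each
   coordinate according to |D_i| <= t or |D_i| > t gives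
     q |D_i| <= rho(|D_i|) + gamma^2 |D_i|^2 / 2                          off S,
     q |D_i| <= xi (1 + xi) rho(t) - xi rho(|D_i|) + gamma^2 |D_i|^2 / 2   on S,
   and summing against the cone inequality leaves q |D|_1 <= s xi (1 + xi) q t. *)

Section RightDerivative.
Variable R : realType.

Lemma rderiv0_unique (f : R -> R) d d' : rderiv0 f d -> rderiv0 f d' -> d = d'.
Proof. by move=> fd fd'; rewrite -(cvg_lim _ fd) // (cvg_lim _ fd'). Qed.

Lemma rderiv0_ge (f : R -> R) d c : rderiv0 f d ->
  (\forall h \near 0^'+, c <= (f h - f 0) / h) -> c <= d.
Proof.
move=> fd c_le; rewrite -(cvg_lim _ fd) //.
by apply: limr_ge => //; apply/cvg_ex; exists d.
Qed.

Lemma rderiv0_le (f : R -> R) d c : rderiv0 f d ->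
  (\forall h \near 0^'+, (f h - f 0) / h <= c) -> d <= c.
Proof.
move=> fd le_c; rewrite -(cvg_lim _ fd) //.
by apply: limr_le => //; apply/cvg_ex; exists d.
Qed.

End RightDerivative.

Section Norms.
Variable R : realType.

Lemma norm2_sqr k (v : 'cV[R]_k) : norm2 v ^+ 2 = \sum_i v i 0 ^+ 2.
Proof. by rewrite sqr_sqrtr // sumr_ge0 // => i _; exact: sqr_ge0. Qed.

Lemma norm2_sqrB k (v x : 'cV[R]_k) :
  norm2 (v - x) ^+ 2 = norm2 v ^+ 2 - 2 * dotv v x + norm2 x ^+ 2.
Proof.
rewrite !norm2_sqr /dotv mulr_sumr -sumrB -big_split /=.
by apply: eq_bigr => i _; rewrite !mxE; ring.
Qed.

Lemma norm2_gt0 k (v : 'cV[R]_k) : v != 0 -> 0 < norm2 v.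
Proof.
apply: contraNT; rewrite sqrtr_gt0 -leNgt => sum_le0.
have sum0 : \sum_i v i 0 ^+ 2 = 0.
  by apply/eqP; rewrite eq_le sum_le0 sumr_ge0 // => i _; exact: sqr_ge0.
apply/eqP/matrixP => i j; rewrite ord1 mxE.
by apply/eqP; rewrite -sqrf_eq0; apply/eqP/(psumr_eq0P _ sum0) => // l _; exact: sqr_ge0.
Qed.

Lemma norm2_0 k : norm2 (0 : 'cV[R]_k) = 0.
Proof. by rewrite /norm2 big1 ?sqrtr0 // => i _; rewrite mxE expr0n. Qed.

Lemma norm1_0 k : norm1 (0 : 'cV[R]_k) = 0.
Proof. by rewrite /norm1 big1 // => i _; rewrite mxE normr0. Qed.

Lemma sumr_splitC k (A : {set 'I_k}) (F : 'I_k -> R) :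
  \sum_i F i = \sum_(i in A) F i + \sum_(i in ~: A) F i.
Proof.
rewrite (bigID (mem A)) /=; congr (_ + _).
by apply: eq_bigl => i; rewrite inE.
Qed.

Lemma sum_norm_le_sqrt_card k (A : {set 'I_k}) (v : 'cV[R]_k) :
  \sum_(i in A) `|v i 0| <= Num.sqrt #|A|%:R * norm2 v.
Proof.
have [A0 | A_gt0] := posnP #|A|.
  by rewrite big_pred0 ?A0 ?sqrtr0 ?mul0r // => i; rewrite (card0_eq A0).
have [-> | v_neq0] := eqVneq v 0.
  by rewrite big1 ?mulr_ge0 ?sqrtr_ge0 // => i _; rewrite mxE normr0.
have s_gt0 : 0 < Num.sqrt #|A|%:R :> R by rewrite sqrtr_gt0 ltr0n.
set s := Num.sqrt (#|A|%:R : R) in s_gt0 *.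
set c := norm2 v / s.
have c_gt0 : 0 < c by rewrite divr_gt0 ?norm2_gt0.
(* AM-GM with the weight [c] that balances the two terms *)
have amgm i : `|v i 0| <= v i 0 ^+ 2 / (2 * c) + c / 2.
  rewrite -subr_ge0 -(real_normK (num_real (v i 0))).
  have -> : `|v i 0| ^+ 2 / (2 * c) + c / 2 - `|v i 0| = (`|v i 0| - c) ^+ 2 / (2 * c).
    by field; rewrite gt_eqF.
  by rewrite divr_ge0 ?sqr_ge0 // mulr_ge0 // ltW.
apply: (le_trans (ler_sum _ (fun i _ => amgm i))).
rewrite big_split /= sumr_const -[c / 2 *+ _]mulr_natr -mulr_suml.
have sq_le : \sum_(i in A) v i 0 ^+ 2 <= norm2 v ^+ 2.
  rewrite norm2_sqr (sumr_splitC A) lerDl.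
  by rewrite sumr_ge0 // => i _; exact: sqr_ge0.
apply: (@le_trans _ _ (norm2 v ^+ 2 / (2 * c) + c / 2 * #|A|%:R)).
  by rewrite lerD2r ler_pM2r // invr_gt0 mulr_gt0.
have -> : (#|A|%:R : R) = s ^+ 2 by rewrite sqr_sqrtr ?ler0n.
suff -> : norm2 v ^+ 2 / (2 * c) + c / 2 * s ^+ 2 = s * norm2 v by [].
by rewrite /c; field; rewrite !gt_eqF ?norm2_gt0.
Qed.

End Norms.

Section ConcavePenalty.
Variables (R : realType) (r : R -> R).
Hypothesis r_ge0 : forall x : R, 0 <= x -> 0 <= r x.
Hypothesis r_concave : forall x y t : R, 0 <= x -> 0 <= y -> 0 <= t -> t <= 1 ->
  t * r x + (1 - t) * r y <= r (t * x + (1 - t) * y).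
Hypothesis r_mono : forall x y : R, 0 <= x -> x <= y -> r x <= r y.
Hypothesis r0 : r 0 = 0.

Lemma penalty_slope_antitone (x y : R) : 0 <= x -> x <= y -> 0 < y -> x * r y <= y * r x.
Proof.
move=> x_ge0 le_xy y_gt0.
have := r_concave (ltW y_gt0) (lexx 0) (divr_ge0 x_ge0 (ltW y_gt0)).
rewrite ler_pdivrMr // mul1r r0 !mulr0 !addr0 divfK ?gt_eqF // => /(_ le_xy).
by rewrite mulrAC ler_pdivrMr // [r x * _]mulrC.
Qed.

Lemma penalty_subadditive (x y : R) : 0 <= x -> 0 <= y -> r (x + y) <= r x + r y.
Proof.
move=> x_ge0 y_ge0; have [xy0 | xy_gt0] := eqVneq (x + y) 0.
  have [-> ->] : x = 0 /\ y = 0 by lra.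
  by rewrite addr0 r0 addr0.
have {xy_gt0}xy_gt0 : 0 < x + y by rewrite lt_neqAle eq_sym xy_gt0 addr_ge0.
have rx : x * r (x + y) <= (x + y) * r x by apply: penalty_slope_antitone => //; lra.
have ry : y * r (x + y) <= (x + y) * r y by apply: penalty_slope_antitone => //; lra.
by rewrite -(ler_pM2l xy_gt0) mulrDr; lra.
Qed.

Lemma penalty_le_rderiv (d x : R) : rderiv0 r d -> 0 <= x -> r x <= d * x.
Proof.
move=> rd; rewrite le0r => /orP[/eqP-> | x_gt0]; first by rewrite r0 mulr0.
rewrite -ler_pdivrMr //; apply: (rderiv0_ge rd); near=> h.
have h_gt0 : 0 < h by near: h; exact: nbhs_right_gt.
have h_le : h <= x by near: h; exact: nbhs_right_le.
rewrite r0 subr0 ler_pdivlMr // mulrAC ler_pdivrMr // mulrC [r h * _]mulrC.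
exact: penalty_slope_antitone (ltW h_gt0) h_le x_gt0.
Unshelve. all: by end_near.
Qed.

Lemma rderiv0_ge0 (d : R) : rderiv0 r d -> 0 <= d.
Proof.
move=> rd; rewrite -[d]mulr1.
by apply: le_trans (penalty_le_rderiv rd ler01); exact: r_ge0.
Qed.

Lemma penalty_gt0 (d t : R) : rderiv0 r d -> 0 < d -> 0 < t -> 0 < r t.
Proof.
move=> rd d_gt0 t_gt0; rewrite lt_neqAle eq_sym r_ge0 ?ltW // andbT.
apply: contraTneq d_gt0 => rt0; rewrite -leNgt.
apply: (rderiv0_le rd); near=> h.
have h_gt0 : 0 < h by near: h; exact: nbhs_right_gt.
have h_le : h <= t by near: h; exact: nbhs_right_le.
suff -> : r h = 0 by rewrite r0 subrr mul0r.
by apply/eqP; rewrite eq_le (r_ge0 (ltW h_gt0)) andbT -rt0 r_mono // ltW.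
Unshelve. all: by end_near.
Qed.

Lemma pen_splitC k (A : {set 'I_k}) (u : 'cV[R]_k) :
  pen r u = penA r A u + penA r (~: A) u.
Proof. exact: sumr_splitC. Qed.

Lemma pen_subr_ge k (theta theta0 : 'cV[R]_k) :
  penA r (~: supp theta0) (theta - theta0) - penA r (supp theta0) (theta - theta0)
    <= pen r theta - pen r theta0.
Proof.
rewrite !(pen_splitC (supp theta0)).
have off_supp : penA r (~: supp theta0) (theta - theta0) = penA r (~: supp theta0) theta.
  by apply: eq_bigr => i; rewrite !inE negbK => /eqP theta0_i; rewrite !mxE theta0_i subr0.
have off_supp0 : penA r (~: supp theta0) theta0 = 0.
  by apply: big1 => i; rewrite !inE negbK => /eqP ->; rewrite normr0 r0.
have on_supp : penA r (supp theta0) theta0 <=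
    penA r (supp theta0) theta + penA r (supp theta0) (theta - theta0).
  rewrite /penA -big_split; apply: ler_sum => i _; rewrite !mxE.
  apply: le_trans (penalty_subadditive (normr_ge0 _) (normr_ge0 _)).
  by apply: r_mono => //; rewrite -{1}(subKr (theta i 0) (theta0 i 0)) ler_normB.
lra.
Qed.

Lemma penA_le_sqrt_card (d : R) k (A : {set 'I_k}) (u : 'cV[R]_k) : rderiv0 r d ->
  penA r A u <= d * Num.sqrt #|A|%:R * norm2 u.
Proof.
move=> rd; apply: (@le_trans _ _ (d * \sum_(i in A) `|u i 0|)).
  by rewrite mulr_sumr; apply: ler_sum => i _; exact: penalty_le_rderiv.
by rewrite -mulrA ler_wpM2l ?(rderiv0_ge0 rd) ?sum_norm_le_sqrt_card.
Qed.

Lemma penalty_slope_le_rderiv (d t : R) : rderiv0 r d -> 0 < t -> r t / t <= d.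
Proof. by move=> rd t_gt0; rewrite ler_pdivrMr // penalty_le_rderiv ?ltW. Qed.

Section ChordSlope.
Variables (d G t : R).
Hypotheses (rd : rderiv0 r d) (G_gt0 : 0 < G) (t_gt0 : 0 < t) (Gt : G * t = 2 * d).

Let slope_facts : [/\ r t / t <= d, 0 <= r t / t & r t / t * t = r t].
Proof.
by split; rewrite ?penalty_slope_le_rderiv ?divr_ge0 ?r_ge0 ?ltW ?divfK ?gt_eqF.
Qed.

Lemma slope_mul_le_penalty_quad (a : R) : 0 <= a ->
  r t / t * a <= r a + G * a ^+ 2 / 2.
Proof.
move=> a_ge0; have [q_le_d q_ge0 qt] := slope_facts; set q := r t / t in q_le_d q_ge0 qt *.
have ra_ge0 := r_ge0 a_ge0.
have Ga2_ge0 : 0 <= G * a ^+ 2 / 2 by rewrite divr_ge0 ?mulr_ge0 ?sqr_ge0 // ltW.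
have [a_le_t | t_lt_a] := leP a t.
  have : a * r t <= t * r a by exact: penalty_slope_antitone.
  rewrite -qt => le_rt; suff : q * a <= r a by lra.
  by rewrite -(ler_pM2l t_gt0); nra.
have two_d_le : 2 * d <= G * a by rewrite -Gt ler_pM2l // ltW.
have : d * a <= G * a ^+ 2 / 2 by rewrite ler_pdivlMr //; nra.
nra.
Qed.

Lemma slope_mul_add_penalty_le (xi a : R) : 1 <= xi -> 0 <= a ->
  r t / t * a <= xi * (1 + xi) * r t - xi * r a + G * a ^+ 2 / 2.
Proof.
move=> xi_ge1 a_ge0; have [q_le_d q_ge0 qt] := slope_facts; set q := r t / t in q_le_d q_ge0 qt *.
have ra_ge0 := r_ge0 a_ge0.
have [a_le_t | t_lt_a] := leP a t.
  have qt_ge0 : 0 <= q * t by rewrite qt r_ge0 // ltW.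
  have xi_ra : xi * r a <= xi * (q * t) by rewrite ler_wpM2l ?qt ?r_mono //; lra.
  have qa_le : q * a <= q * t by rewrite ler_wpM2l.
  have Ga2_ge0 : 0 <= G * a ^+ 2 / 2 by rewrite divr_ge0 ?mulr_ge0 ?sqr_ge0 // ltW.
  have : (1 + xi) * (q * t) <= xi * ((1 + xi) * (q * t)).
    by rewrite ler_peMl // mulr_ge0 //; lra.
  rewrite -qt; lra.
have ra_le : r a <= q * a.
  have : t * r a <= a * r t.
    by apply: penalty_slope_antitone; [exact: ltW | exact: ltW | exact: lt_trans t_lt_a].
  by rewrite -qt => le_ra; rewrite -(ler_pM2l t_gt0); nra.
(* completing the square in [a] *)
have quad : q * (1 + xi) * a - G * a ^+ 2 / 2 <= (q * (1 + xi)) ^+ 2 / (2 * G).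
  have := sqr_ge0 (q * (1 + xi) - G * a).
  rewrite ler_pdivlMr ?mulr_gt0 //; nra.
have sq_le : (q * (1 + xi)) ^+ 2 / (2 * G) <= xi * (1 + xi) * r t.
  rewrite ler_pdivrMr ?mulr_gt0 // -qt.
  have -> : xi * (1 + xi) * (q * t) * (2 * G) = q * (1 + xi) * (2 * xi * (G * t)).
    by ring.
  rewrite Gt expr2 ler_wpM2l ?(mulr_ge0 q_ge0) //; nra.
nra.
Qed.

End ChordSlope.

Lemma penA_ge0 k (A : {set 'I_k}) (u : 'cV[R]_k) : 0 <= penA r A u.
Proof. by rewrite sumr_ge0 // => i _; exact: r_ge0. Qed.

Section Estimation.
Variables (n m : nat) (Z : 'M[R]_(n, m)) (w : 'cV[R]_n).
Variables (theta_star thetahat : 'cV[R]_m) (d delta : R).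
Hypotheses (rd : rderiv0 r d) (delta_gt0 : 0 < delta) (delta_lt1 : delta < 1).
Hypothesis noise : forall u : 'cV[R]_m,
  n%:R^-1 * `|dotv w (Z *m u)| <=
  delta * ((2 * n%:R)^-1 * norm2 (Z *m u) ^+ 2 + pen r u).
Hypothesis optimal :
  (2 * n%:R)^-1 * norm2 (Z *m theta_star + w - Z *m thetahat) ^+ 2 + pen r thetahat <=
  (2 * n%:R)^-1 * norm2 (Z *m theta_star + w - Z *m theta_star) ^+ 2 + pen r theta_star.

Local Notation D := (thetahat - theta_star).
Local Notation S := (supp theta_star).
Local Notation xi := ((1 + delta) / (1 - delta)).

Let xi_ge1 : 1 <= xi.
Proof. by rewrite ler_pdivlMr ?subr_gt0 // mul1r; move: delta_gt0; lra. Qed.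

Let xi_ge0 : 0 <= xi. Proof. exact: le_trans ler01 xi_ge1. Qed.

Lemma error_basic_inequality :
  (2 * n%:R)^-1 * norm2 (Z *m D) ^+ 2 + (pen r thetahat - pen r theta_star) <=
  n%:R^-1 * dotv w (Z *m D).
Proof.
have e_hat : Z *m theta_star + w - Z *m thetahat = w - Z *m D.
  by rewrite mulmxBr opprB addrCA addrA.
have e_star : Z *m theta_star + w - Z *m theta_star = w by rewrite addrAC subrr add0r.
by move: optimal; rewrite e_hat e_star norm2_sqrB invfM; lra.
Qed.

Lemma error_cone_inequality :
  (2 * n%:R)^-1 * norm2 (Z *m D) ^+ 2 + penA r (~: S) D <= xi * penA r S D.
Proof.
have basic := error_basic_inequality.
have pen_sub := pen_subr_ge thetahat theta_star.
have dot_le : n%:R^-1 * dotv w (Z *m D) <= n%:R^-1 * `|dotv w (Z *m D)|.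
  by rewrite ler_wpM2l ?invr_ge0 ?ler0n ?ler_norm.
have := noise D; rewrite (pen_splitC S) => noise_D.
rewrite mulrAC ler_pdivlMr ?subr_gt0 //; nra.
Qed.

Lemma error_in_cone : cone r S xi D.
Proof.
have Q_ge0 : 0 <= (2 * n%:R)^-1 * norm2 (Z *m D) ^+ 2.
  by rewrite mulr_ge0 ?sqr_ge0 // invr_ge0 mulr_ge0 ?ler0n.
by have := error_cone_inequality; rewrite /cone /=; lra.
Qed.

Section RestrictedEigenvalue.
Variable G : R.
Hypotheses (G_gt0 : 0 < G)
  (G_le : G * norm2 D ^+ 2 <= n%:R^-1 * norm2 (Z *m D) ^+ 2).

Let quad_cone_inequality : G * norm2 D ^+ 2 / 2 + penA r (~: S) D <= xi * penA r S D.
Proof.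
apply: le_trans error_cone_inequality; rewrite lerD2r invfM.
by have := G_le; set k := n%:R^-1; lra.
Qed.

Lemma error_l2_bound : D != 0 ->
  norm2 D * G <= 2 * xi * d * Num.sqrt (norm0 theta_star)%:R.
Proof.
move=> D_neq0; have N_gt0 := norm2_gt0 D_neq0.
have PS_le : xi * penA r S D <= xi * (d * Num.sqrt #|S|%:R * norm2 D).
  by rewrite ler_wpM2l ?xi_ge0 // penA_le_sqrt_card.
have quad := quad_cone_inequality; have PN_ge0 := penA_ge0 (~: S) D.
rewrite -(ler_pM2r N_gt0) /norm0.
by move: PS_le quad; nra.
Qed.

Lemma error_l1_bound : 0 < d ->
  norm1 D * G <= 2 * xi * (1 + xi) * d * (norm0 theta_star)%:R.
Proof.
move=> d_gt0; set t := 2 * d / G.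
have t_gt0 : 0 < t by rewrite divr_gt0 ?mulr_gt0.
have Gt : G * t = 2 * d by rewrite mulrC divfK ?gt_eqF.
have on_S : \sum_(i in S) r t / t * `|D i 0| <=
    \sum_(i in S) (xi * (1 + xi) * r t - xi * r `|D i 0| + G * `|D i 0| ^+ 2 / 2).
  apply: ler_sum => i _.
  exact: (slope_mul_add_penalty_le rd G_gt0 t_gt0 Gt xi_ge1 (normr_ge0 (D i 0))).
have off_S : \sum_(i in ~: S) r t / t * `|D i 0| <=
    \sum_(i in ~: S) (r `|D i 0| + G * `|D i 0| ^+ 2 / 2).
  apply: ler_sum => i _.
  exact: (slope_mul_le_penalty_quad rd G_gt0 t_gt0 Gt (normr_ge0 (D i 0))).
rewrite big_split sumrB /= sumr_const -[_ *+ #|S|]mulr_natl in on_S.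
rewrite -!mulr_sumr -mulr_suml -mulr_sumr in on_S.
rewrite big_split /= -!mulr_sumr -mulr_suml -mulr_sumr in off_S.
have N2 : norm2 D ^+ 2 = \sum_(i in S) `|D i 0| ^+ 2 + \sum_(i in ~: S) `|D i 0| ^+ 2.
  rewrite norm2_sqr (sumr_splitC S).
  by congr (_ + _); apply: eq_bigr => i _; rewrite real_normK ?num_real.
have quad := quad_cone_inequality; rewrite N2 /penA in quad.
have q_gt0 : 0 < r t / t by rewrite divr_gt0 // (penalty_gt0 rd).
have l1_le : norm1 D <= #|S|%:R * (xi * (1 + xi) * t).
  rewrite -(ler_pM2l q_gt0) [norm1 D](sumr_splitC S) mulrDr.
  set q := r t / t in on_S off_S q_gt0 *.
  have qt : q * t = r t by rewrite divfK ?gt_eqF.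
  by move: on_S off_S quad; rewrite -qt; lra.
have -> : 2 * xi * (1 + xi) * d * (norm0 theta_star)%:R =
    #|S|%:R * (xi * (1 + xi) * t) * G.
  by rewrite /norm0 /t; set x := xi; field; rewrite gt_eqF.
by rewrite ler_pM2r.
Qed.

End RestrictedEigenvalue.

End Estimation.

End ConcavePenalty.

Lemma gamma2_gt0_bound (R : realType) (rho : R -> R) n m (Z : 'M[R]_(n, m))
    (A : {set 'I_m}) (xi : R) (u : 'cV[R]_m) :
  cone rho A xi u -> u != 0 -> (0 < gamma2 rho Z A xi)%E ->
  exists G, [/\ gamma2 rho Z A xi = G%:E, 0 < G &
    G * norm2 u ^+ 2 <= n%:R^-1 * norm2 (Z *m u) ^+ 2].
Proof.
move=> u_cone u_neq0 gamma_gt0.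
have : (gamma2 rho Z A xi <= (norm2 (Z *m u) ^+ 2 / (n%:R * norm2 u ^+ 2))%:E)%E.
  by apply: ereal_inf_lbound; exists u.
move: gamma_gt0; case: (gamma2 rho Z A xi) => [G | | ] //=; rewrite lte_fin lee_fin.
move=> G_gt0 G_le; exists G; split => //.
have N2_gt0 : 0 < norm2 u ^+ 2 by rewrite exprn_gt0 ?norm2_gt0.
have [n0 | n_neq0] := eqVneq (n%:R : R) 0.
  by move: G_le; rewrite n0 mul0r invr0 mulr0 leNgt G_gt0.
have n_gt0 : 0 < n%:R :> R by rewrite lt0r n_neq0 ler0n.
by rewrite -ler_pdivlMr // mulrAC -invfM mulrC.
Qed.

Theorem theorem8 (R : realType) (n m : nat) (Z : 'M[R]_(n, m)) (w : 'cV[R]_n)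
  (theta_star : 'cV[R]_m) (rho : R -> R -> R) (lam : R) (delta : R) (d : R)
  (thetahat : 'cV[R]_m) :
  let y := Z *m theta_star + w in
  let xi := (1 + delta) / (1 - delta) in
  let obj := fun theta : 'cV[R]_m =>
    (2 * n%:R)^-1 * (norm2 (y - Z *m theta)) ^+ 2 + pen (rho lam) theta in
  condR rho -> 0 < lam ->
  rderiv0 (rho lam) d ->
  0 < delta -> delta < 1 ->
  (forall u : 'cV[R]_m,
     n%:R^-1 * `|dotv w (Z *m u)| <=
     delta * ((2 * n%:R)^-1 * (norm2 (Z *m u)) ^+ 2 + pen (rho lam) u)) ->
  (0 < gamma2 (rho lam) Z (supp theta_star) xi)%E ->
  (forall theta : 'cV[R]_m, obj thetahat <= obj theta) ->
  ((norm2 (thetahat - theta_star))%:E * gamma2 (rho lam) Z (supp theta_star) xi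
     <= (2 * xi * d * Num.sqrt (norm0 theta_star)%:R)%:E)%E /\
  ((norm1 (thetahat - theta_star))%:E * gamma2 (rho lam) Z (supp theta_star) xi
     <= (2 * xi * (1 + xi) * d * (norm0 theta_star)%:R)%:E)%E.
Proof.
move=> y xi obj [shape _] lam_gt0 rd delta_gt0 delta_lt1 noise gamma_gt0 optimal.
have [r_ge0 [r_concave [r_mono [r0 [d' [d'_gt0 rd']]]]]] := shape lam lam_gt0.
have d_gt0 : 0 < d by rewrite (rderiv0_unique rd rd').
have xi_ge0 : 0 <= xi by apply: divr_ge0; lra.
have [-> | D_neq0] := eqVneq (thetahat - theta_star) 0.
  rewrite norm2_0 norm1_0 !mul0e !lee_fin.
  have c_ge0 : 0 <= 2 * xi * d by rewrite mulr_ge0 ?(ltW d_gt0) // mulr_ge0 ?ler0n.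
  split; first by rewrite mulr_ge0 ?sqrtr_ge0.
  by rewrite mulr_ge0 ?ler0n // mulrAC mulr_ge0 // addr_ge0.
have opt := optimal theta_star.
have D_cone := error_in_cone r_concave r_mono r0 delta_lt1 noise opt.
have [G [-> G_gt0 G_le]] := gamma2_gt0_bound D_cone D_neq0 gamma_gt0.
rewrite -!EFinM !lee_fin; split.
  exact: (error_l2_bound r_ge0 r_concave r_mono r0 rd delta_gt0 delta_lt1 noise opt G_le).
exact: (error_l1_bound r_ge0 r_concave r_mono r0 rd delta_gt0 delta_lt1 noise opt G_gt0 G_le).
Qed.
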